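(* Let $S$ be an inverse semigroup and $\alpha=(A_s,\alpha_s)_{s\in S}$ a partial action of $S$ on a ring $A$. Define $\gamma_\alpha:S\to\mathcal{I}(A)$ by letting $\gamma_\alpha(s)$ be the bijection $A_{s^{-1}}\to A_s$ (between subsets of the underlying set of $A$) given by $\gamma_\alpha(s)(a)=\alpha_s(a)$. Then $\gamma_\alpha$ is an inverse semigroup premorphism.
   Context: $S$ is an inverse semigroup with set of idempotents $E(S)$ and natural partial order $s\preceq t$ iff $s=te$ for some $e\in E(S)$. A partial action of $S$ on a ring $A$ is a family of ideals $A_{ss^{-1}}$ of $A$, ideals $A_s$ of $A_{ss^{-1}}$, and ring isomorphisms $\alpha_s:A_{s^{-1}}\to A_s$ ($s\in S$) such that (P1') $A=\sum_{e\in E(S)}A_e$; (P2') $\alpha_s(A_{s^{-1}}\cap A_t)=A_s\cap A_{st}$ for all $s,t$; (P3') $\alpha_s(\alpha_t(a))=\alpha_{st}(a)$ for all $a\in A_{t^{-1}}\cap A_{(st)^{-1}}$. $\mathcal{I}(A)$ is the symmetric inverse semigroup of all bijections between subsets of the underlying set of $A$, under composition of partial maps. A map $\psi:S\to T$ between inverse semigroups is a premorphism if for all $s,t\in S$: (i) $\psi(s)\psi(t)\preceq\psi(st)$; (ii) $\psi(s)^{-1}=\psi(s^{-1})$; (iii) $s\preceq t$ implies $\psi(s)\preceq\psi(t)$. *)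

From Stdlib Require List.
From mathcomp Require Import all_boot all_algebra.
Set Implicit Arguments. Unset Strict Implicit. Unset Printing Implicit Defensive.
Import GRing.Theory.
Local Open Scope ring_scope.

Record invSemigroup := InvSemigroup {
  isg_car :> Type;
  isg_mul : isg_car -> isg_car -> isg_car;
  isg_inv : isg_car -> isg_car;
  isg_mulA : forall x y z, isg_mul x (isg_mul y z) = isg_mul (isg_mul x y) z;
  isg_inv1 : forall s, isg_mul (isg_mul s (isg_inv s)) s = s;
  isg_inv2 : forall s, isg_mul (isg_mul (isg_inv s) s) (isg_inv s) = isg_inv s;
  isg_inv_uniq : forall s t, isg_mul (isg_mul s t) s = s ->
                   isg_mul (isg_mul t s) t = t -> t = isg_inv s }.

Definition idempotent_el (T : Type) (mul : T -> T -> T) (e : T) : Prop :=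
  mul e e = e.
Definition nat_le (T : Type) (mul : T -> T -> T) (s t : T) : Prop :=
  exists2 e, idempotent_el mul e & s = mul t e.

Definition premorphism (S : invSemigroup) (T : Type)
  (mulT : T -> T -> T) (invT : T -> T) (psi : S -> T) : Prop :=
  [/\ forall s t : S, nat_le mulT (mulT (psi s) (psi t)) (psi (isg_mul s t)),
      forall s : S, invT (psi s) = psi (isg_inv s) &
      forall s t : S, nat_le (@isg_mul S) s t -> nat_le mulT (psi s) (psi t)].

(* A bijection between subsets of X, represented by its graph: a functional
   and injective relation (domain = {x | exists y, rel x y}). *)
Record pbij (X : Type) := PBij {
  pb_rel : X -> X -> Prop;
  pb_fun : forall x y z, pb_rel x y -> pb_rel x z -> y = z;
  pb_inj : forall x y z, pb_rel x z -> pb_rel y z -> x = y }.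

Definition pb_comp_rel X (f g : pbij X) : X -> X -> Prop :=
  fun x z => exists y, pb_rel g x y /\ pb_rel f y z.

Lemma pb_comp_fun X (f g : pbij X) x y z :
  pb_comp_rel f g x y -> pb_comp_rel f g x z -> y = z.
Proof.
move=> [u [gu fu]] [v [gv fv]].
have euv := pb_fun gu gv; subst v; exact: pb_fun fu fv.
Qed.

Lemma pb_comp_inj X (f g : pbij X) x y z :
  pb_comp_rel f g x z -> pb_comp_rel f g y z -> x = y.
Proof.
move=> [u [gu fu]] [v [gv fv]].
have euv := pb_inj fu fv; subst v; exact: pb_inj gu gv.
Qed.

Definition pb_comp X (f g : pbij X) : pbij X :=
  PBij (@pb_comp_fun X f g) (@pb_comp_inj X f g).

Definition pb_inv X (f : pbij X) : pbij X :=
  PBij (fun x y z (h1 : pb_rel f y x) (h2 : pb_rel f z x) => pb_inj h1 h2)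
       (fun x y z (h1 : pb_rel f z x) (h2 : pb_rel f z y) => pb_fun h1 h2).

Definition is_ideal (A : pzRingType) (I : A -> Prop) : Prop :=
  [/\ I 0, (forall x y, I x -> I y -> I (x - y)) &
      forall a x, I x -> I (a * x) /\ I (x * a)].

Definition is_ideal_of (A : pzRingType) (J I : A -> Prop) : Prop :=
  [/\ forall x, I x -> J x, I 0, (forall x y, I x -> I y -> I (x - y)) &
      forall a x, J a -> I x -> I (a * x) /\ I (x * a)].

(* f restricts to a ring isomorphism I -> J (rings possibly without unit) *)
Definition ring_iso_on (A : pzRingType) (I J : A -> Prop) (f : A -> A) : Prop :=
  [/\ forall x, I x -> J (f x),
      forall x y, I x -> I y -> f (x + y) = f x + f y,
      forall x y, I x -> I y -> f (x * y) = f x * f y,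
      forall x y, I x -> I y -> f x = f y -> x = y &
      forall y, J y -> exists2 x, I x & f x = y].

(* Ad s = A_s, alpha s = alpha_s (a total function; only its restriction to
   A_{s^{-1}} matters). *)
Record partial_action (S : invSemigroup) (A : pzRingType)
    (Ad : S -> A -> Prop) (alpha : S -> A -> A) : Prop := {
  pa_ideal : forall s, is_ideal (Ad (isg_mul s (isg_inv s)));
  pa_ideal_of : forall s, is_ideal_of (Ad (isg_mul s (isg_inv s))) (Ad s);
  pa_iso : forall s, ring_iso_on (Ad (isg_inv s)) (Ad s) (alpha s);
  pa_P1 : forall a : A, exists l : seq (S * A),
      (forall p, List.In p l -> idempotent_el (@isg_mul S) p.1 /\ Ad p.1 p.2)
      /\ a = \sum_(p <- l) p.2;
  pa_P2 : forall s t b, (Ad s b /\ Ad (isg_mul s t) b) <->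
      exists2 a, Ad (isg_inv s) a /\ Ad t a & alpha s a = b;
  pa_P3 : forall s t a, Ad (isg_inv t) a -> Ad (isg_inv (isg_mul s t)) a ->
      alpha s (alpha t a) = alpha (isg_mul s t) a }.

Definition gamma_rel (S : invSemigroup) (A : pzRingType)
  (Ad : S -> A -> Prop) (alpha : S -> A -> A) (s : S) : A -> A -> Prop :=
  fun x y => Ad (isg_inv s) x /\ alpha s x = y.

Lemma gamma_fun S A Ad alpha s x y z :
  @gamma_rel S A Ad alpha s x y -> gamma_rel Ad alpha s x z -> y = z.
Proof. by move=> [_ <-] [_ <-]. Qed.

Lemma gamma_inj S A Ad alpha (pa : @partial_action S A Ad alpha) s x y z :
  @gamma_rel S A Ad alpha s x z -> gamma_rel Ad alpha s y z -> x = y.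
Proof.
move=> [hx ex] [hy ey]; case: (pa_iso pa s) => _ _ _ inj _.
by apply: inj => //; rewrite ex ey.
Qed.

Definition gamma (S : invSemigroup) (A : pzRingType) (Ad : S -> A -> Prop)
  (alpha : S -> A -> A) (pa : partial_action Ad alpha) (s : S) : pbij A :=
  PBij (@gamma_fun S A Ad alpha s) (@gamma_inj S A Ad alpha pa s).

(* Two facts do all the work. In the symmetric inverse semigroup, a partial
   bijection whose graph is contained in that of g lies below g in the natural
   order (it is g restricted to its own domain). And a partial action behaves
   like an action wherever both sides are defined: alpha_e is the identity on
   A_e for idempotent e, alpha_{s^-1} inverts alpha_s, and (P2') pins down the
   domains A_{(st)^-1} and A_{(te)^-1}. Hence gamma(s) gamma(t) and gamma(te)
   are restrictions of gamma(st) and gamma(t), and gamma(s)^-1 = gamma(s^-1). *)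

From mathcomp Require Import all_boot all_algebra.
From Stdlib Require Import FunctionalExtensionality PropExtensionality.
From Stdlib Require Import ProofIrrelevance.

Local Notation "x ** y" := (isg_mul x y) (at level 40, left associativity).

Section InverseSemigroupTheory.

Context {S : invSemigroup}.
Implicit Types s t e f p : S.

Local Notation idem := (idempotent_el (@isg_mul S)).

Lemma isg_invK s : isg_inv (isg_inv s) = s.
Proof. by symmetry; apply: isg_inv_uniq; [exact: isg_inv2 | exact: isg_inv1]. Qed.

Lemma isg_inv_idem {e} : idem e -> isg_inv e = e.
Proof. by move=> ee; symmetry; apply: isg_inv_uniq; rewrite !ee. Qed.

Lemma isg_idem_mulV s : idem (s ** isg_inv s).
Proof. by rewrite /idempotent_el isg_mulA isg_inv1. Qed.

Lemma isg_idem_Vmul s : idem (isg_inv s ** s).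
Proof. by rewrite /idempotent_el isg_mulA isg_inv2. Qed.

Lemma isg_mulr_inv1 p s : p ** s ** isg_inv s ** s = p ** s.
Proof. by have := congr1 (isg_mul p) (isg_inv1 s); rewrite !isg_mulA. Qed.

Lemma isg_mulr_inv2 p s : p ** isg_inv s ** s ** isg_inv s = p ** isg_inv s.
Proof. by have := congr1 (isg_mul p) (isg_inv2 s); rewrite !isg_mulA. Qed.

Lemma isg_idem_mulr {e} : idem e -> forall p, p ** e ** e = p ** e.
Proof. by move=> ee p; rewrite -isg_mulA ee. Qed.

(* With x := (ef)^-1, the element f x e is another inverse of ef, so it is x;
   this makes x idempotent, hence equal to its own inverse ef. *)
Lemma isg_idem_mul {e f} : idem e -> idem f -> idem (e ** f).
Proof.
move=> ee ff.
have efx := isg_inv1 (e ** f); have xef := isg_inv2 (e ** f).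
rewrite !isg_mulA in efx xef.
have fxefxe := congr1 (fun y => f ** y ** e) xef; rewrite /= !isg_mulA in fxefxe.
have fxe : f ** isg_inv (e ** f) ** e = isg_inv (e ** f).
  apply: isg_inv_uniq.
  - by rewrite !isg_mulA (isg_idem_mulr ff) (isg_idem_mulr ee) efx.
  - by rewrite !isg_mulA (isg_idem_mulr ee) (isg_idem_mulr ff) fxefxe.
have xx : idem (isg_inv (e ** f)).
  by rewrite /idempotent_el -{1 2}fxe !isg_mulA fxefxe.
by rewrite /idempotent_el -[e ** f]isg_invK (isg_inv_idem xx).
Qed.

Lemma isg_idem_comm {e f} : idem e -> idem f -> e ** f = f ** e.
Proof.
move=> ee ff; have ef := isg_idem_mul ee ff; have fe := isg_idem_mul ff ee.
rewrite -{1}(isg_inv_idem ef); symmetry; apply: isg_inv_uniq.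
- by rewrite !isg_mulA (isg_idem_mulr ff) (isg_idem_mulr ee) -isg_mulA ef.
- by rewrite !isg_mulA (isg_idem_mulr ee) (isg_idem_mulr ff) -isg_mulA fe.
Qed.

Lemma isg_inv_mul s t : isg_inv (s ** t) = isg_inv t ** isg_inv s.
Proof.
have comm := isg_idem_comm (isg_idem_mulV t) (isg_idem_Vmul s).
symmetry; apply: isg_inv_uniq.
- have := congr1 (fun y => s ** y ** t) comm; rewrite /= !isg_mulA => ->.
  by rewrite isg_inv1 isg_mulr_inv1.
- have := congr1 (fun y => isg_inv t ** y ** isg_inv s) (esym comm).
  by rewrite /= !isg_mulA => ->; rewrite isg_inv2 isg_mulr_inv2.
Qed.

End InverseSemigroupTheory.

Lemma pbij_ext (X : Type) (f g : pbij X) :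
  (forall x y, pb_rel f x y <-> pb_rel g x y) -> f = g.
Proof.
case: f g => [rf ff fi] [rg gf gi] /= fg.
have erfg : rf = rg.
  do 2![apply: functional_extensionality => ?].
  exact: propositional_extensionality.
by subst rg; congr PBij; apply: proof_irrelevance.
Qed.

Lemma pb_comp_invlE (X : Type) (f : pbij X) x y :
  pb_rel (pb_comp (pb_inv f) f) x y <-> x = y /\ exists z, pb_rel f x z.
Proof.
split=> [[z [fxz fyz]] | [<- [z fxz]]]; last by exists z.
by split; [exact: pb_inj fxz fyz | exists z].
Qed.

(* f is g restricted to the domain of f, i.e. g composed with the idempotent
   f^-1 f. *)
Lemma pb_subrel_nat_le (X : Type) (f g : pbij X) :
  (forall x y, pb_rel f x y -> pb_rel g x y) -> nat_le (@pb_comp X) f g.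
Proof.
move=> fg; exists (pb_comp (pb_inv f) f).
  apply: pbij_ext => x z; split.
    by move=> [y [/pb_comp_invlE [<- _]]].
  by move=> /pb_comp_invlE [<- dx]; exists x; split; apply/pb_comp_invlE.
apply: pbij_ext => x z; split.
  move=> fxz; exists x; split; last exact: fg.
  by apply/pb_comp_invlE; split; last exists z.
by move=> [y [/pb_comp_invlE [<- [u fxu]] gxz]]; rewrite -(pb_fun (fg _ _ fxu) gxz).
Qed.

Section PartialAction.

Variables (S : invSemigroup) (A : pzRingType).
Variables (Ad : S -> A -> Prop) (alpha : S -> A -> A).
Hypothesis pa : partial_action Ad alpha.
Implicit Types (s t e u : S) (x : A).

Local Notation idem := (idempotent_el (@isg_mul S)).

Lemma pa_alpha_dom {s x} : Ad (isg_inv s) x -> Ad s (alpha s x).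
Proof. by case: (pa_iso pa s) => + _ _ _ _; apply. Qed.

Lemma pa_dom_mulV {s x} : Ad s x -> Ad (s ** isg_inv s) x.
Proof. by case: (pa_ideal_of pa s) => + _ _ _; apply. Qed.

(* alpha_e (alpha_e x) = alpha_{ee} x = alpha_e x by (P3'), and alpha_e is
   injective on A_e. *)
Lemma pa_alpha_idem {e x} : idem e -> Ad e x -> alpha e x = x.
Proof.
move=> ee ex; have eVx : Ad (isg_inv e) x by rewrite isg_inv_idem.
have eeVx : Ad (isg_inv (e ** e)) x by rewrite ee.
have aax : alpha e (alpha e x) = alpha e x by rewrite (pa_P3 pa eVx eeVx) ee.
case: (pa_iso pa e) => _ _ _ alpha_inj _; apply: alpha_inj aax => //.
by rewrite (isg_inv_idem ee); apply: pa_alpha_dom.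
Qed.

Lemma pa_alphaVK {s x} : Ad (isg_inv s) x -> alpha (isg_inv s) (alpha s x) = x.
Proof.
move=> sx; have ss := isg_idem_Vmul s.
have ssx : Ad (isg_inv s ** s) x by rewrite -{2}[s]isg_invK; apply: pa_dom_mulV.
by rewrite (pa_P3 pa sx) ?(isg_inv_idem ss) // pa_alpha_idem.
Qed.

(* (P2') with s := g: A_g cap A_{gt} = alpha_g (A_g cap A_t) = A_g cap A_t. *)
Lemma pa_dom_idem_mulr {g t x} : idem g -> Ad g x -> Ad (g ** t) x -> Ad t x.
Proof.
move=> gg gx gtx; have [y [gy ty] <-] := (pa_P2 pa g t x).1 (conj gx gtx).
by rewrite (isg_inv_idem gg) in gy; rewrite pa_alpha_idem.
Qed.

(* g := (eu)(eu)^-1 is an idempotent with A_{eu} in A_g and g e = g. *)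
Lemma pa_dom_idem_mul {e u x} : idem e -> Ad (e ** u) x -> Ad e x /\ Ad u x.
Proof.
move=> ee eux; have gg := isg_idem_mulV (e ** u).
have gx := pa_dom_mulV eux.
have ge : e ** u ** isg_inv (e ** u) ** e = e ** u ** isg_inv (e ** u).
  by rewrite isg_inv_mul (isg_inv_idem ee) !isg_mulA (isg_idem_mulr ee).
have ex : Ad e x by apply: (pa_dom_idem_mulr gg gx); rewrite ge.
by split=> //; apply: (pa_dom_idem_mulr ee ex).
Qed.

(* (P2') with s := t^-1 and t := s^-1, applied to alpha_t x in A_t cap A_{s^-1}. *)
Lemma pa_dom_comp {s t x} :
  Ad (isg_inv t) x -> Ad (isg_inv s) (alpha t x) -> Ad (isg_inv (s ** t)) x.
Proof.
move=> tx stx; rewrite isg_inv_mul.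
apply: (proj2 ((pa_P2 pa (isg_inv t) (isg_inv s) x).2 _)).
exists (alpha t x); last exact: pa_alphaVK.
by split; rewrite ?isg_invK //; apply: pa_alpha_dom.
Qed.

Lemma gamma_comp_subrel s t x y :
  pb_rel (pb_comp (gamma pa s) (gamma pa t)) x y -> pb_rel (gamma pa (s ** t)) x y.
Proof.
move=> [_ [[tx <-] [stx <-]]]; have sttx := pa_dom_comp tx stx.
by split=> //; rewrite (pa_P3 pa tx sttx).
Qed.

Lemma gamma_inv s : pb_inv (gamma pa s) = gamma pa (isg_inv s).
Proof.
apply: pbij_ext => x y; split=> [[sy <-] | [sx <-]].
  by split; [rewrite isg_invK; apply: pa_alpha_dom | exact: pa_alphaVK].
by split; [exact: pa_alpha_dom | have := pa_alphaVK sx; rewrite isg_invK].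
Qed.

Lemma gamma_mul_idem_subrel t e x y :
  idem e -> pb_rel (gamma pa (t ** e)) x y -> pb_rel (gamma pa t) x y.
Proof.
move=> ee [tex <-].
have etx : Ad (e ** isg_inv t) x by rewrite -(isg_inv_idem ee) -isg_inv_mul.
have [ex tx] := pa_dom_idem_mul ee etx.
have eVx : Ad (isg_inv e) x by rewrite isg_inv_idem.
by split=> //; rewrite -(pa_P3 pa eVx tex) (pa_alpha_idem ee ex).
Qed.

End PartialAction.

Theorem mainTheorem7 (S : invSemigroup) (A : pzRingType)
  (Ad : S -> A -> Prop) (alpha : S -> A -> A)
  (pa : partial_action Ad alpha) :
  premorphism (@pb_comp A) (@pb_inv A) (gamma pa).
Proof.
split.
- by move=> s t; apply: pb_subrel_nat_le; exact: gamma_comp_subrel.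
- exact: gamma_inv.
- move=> s t [e ee ->]; apply: pb_subrel_nat_le => x y.
  exact: gamma_mul_idem_subrel ee.
Qed.
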